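(* Let $\mathcal E$ be an exchangeability system for a noncommutative probability space $(\mathcal A,\phi)$, let $X_1,\dots,X_n\in\mathcal A$ and $\pi\in\Pi_n$. For each block $B=\{k_1<k_2<\dots<k_b\}$ of $\pi$ choose a primitive root of unity $\omega_b$ of order $b=|B|$ and set, for $i\in B$, $$X_i^{\pi,\omega}=\omega_bX_i^{(k_1)}+\omega_b^2X_i^{(k_2)}+\dots+\omega_b^{b}X_i^{(k_b)}.$$ Then $$K_\pi(X_1,\dots,X_n)=\frac{1}{\prod_{B\in\pi}|B|}\,\tilde\phi(X_1^{\pi,\omega}X_2^{\pi,\omega}\cdots X_n^{\pi,\omega}).$$
   Context: A noncommutative probability space is a pair $(\mathcal A,\phi)$ of a complex unital algebra $\mathcal A$ and a unital linear functional $\phi$. An exchangeability system $\mathcal E$ for $(\mathcal A,\phi)$ consists of a noncommutative probability space $(\mathcal U,\tilde\phi)$ and a family $(\iota_k)_{k\in\mathbb N}$ of embeddings (injective unital algebra homomorphisms) $\iota_k:\mathcal A\to\mathcal A_k\subseteq\mathcal U$ with $\tilde\phi\circ\iota_k=\phi$; write $X^{(k)}=\iota_k(X)$. It is required that for all $X_1,\dots,X_n\in\mathcal A$, all indices $i_1,\dots,i_n\in\mathbb N$ and every bijection $\sigma$ of $\mathbb N$, $\tilde\phi(X_1^{(i_1)}\cdots X_n^{(i_n)})=\tilde\phi(X_1^{(\sigma(i_1))}\cdots X_n^{(\sigma(i_n))})$; so this value depends only on the kernel of $j\mapsto i_j$ (partition of $[n]$ into level sets), and for a partition $\sigma$ of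 $[n]$ it is denoted $\phi_\sigma(X_1,\dots,X_n)$. $\Pi_n$ is the lattice of set partitions of $[n]$ ordered by refinement, with Möbius function $\mu$. The partitioned cumulant is $K_\pi(X_1,\dots,X_n)=\sum_{\sigma\in\Pi_n,\ \sigma\le\pi}\phi_\sigma(X_1,\dots,X_n)\,\mu(\sigma,\pi)$. *)

From HB Require Import structures.
From mathcomp Require Import all_boot all_order all_algebra.
From mathcomp Require Import reals.
From mathcomp.real_closed Require Import complex.

Set Implicit Arguments.
Unset Strict Implicit.
Unset Printing Implicit Defensive.

Import Order.TTheory GRing.Theory Num.Theory.
Local Open Scope ring_scope.

Definition setpart (n : nat) := {P : {set {set 'I_n}} | partition P [set: 'I_n]}.

Definition refines n (s p : setpart n) : bool :=
  [forall B in val s, exists C in val p, B \subset C].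

(* The fuel argument bounds the recursion depth;
   fuel #|T| is always sufficient since strict chains have length < #|T|. *)
Fixpoint mobius_fuel (R : pzRingType) (T : finType) (le : rel T) (k : nat)
    (x y : T) : R :=
  if ~~ le x y then 0 else
  if x == y then 1 else
  match k with
  | 0 => 0
  | k'.+1 => - \sum_(z : T | le x z && le z y && (z != y)) mobius_fuel R le k' x z
  end.

Definition mobius (R : pzRingType) (T : finType) (le : rel T) (x y : T) : R :=
  mobius_fuel R le #|T| x y.

Definition exchangeability_system (C : comNzRingType) (A U : algType C)
    (phi : A -> C) (phit : U -> C) (iota : nat -> A -> U) : Prop :=
  [/\
      (forall (a : C) (x y : U), phit (a *: x + y) = a * phit x + phit y)
        /\ phit 1 = 1,
      (forall k, [/\ linear (iota k), monoid_morphism (iota k) & injective (iota k)]),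
      (forall k X, phit (iota k X) = phi X) &
      (forall (m : nat) (X : 'I_m -> A) (i : 'I_m -> nat) (s : nat -> nat),
         bijective s ->
         phit (\prod_(j < m) iota (i j) (X j)) =
         phit (\prod_(j < m) iota (s (i j)) (X j)))].

(* phi_sigma(X_1,...,X_n): evaluate with copy indices whose kernel is sigma;
   here block number (position of the block in enum sigma) is used. *)

Definition phi_sigma (C : comNzRingType) (A U : algType C) (phit : U -> C)
    (iota : nat -> A -> U) n (s : setpart n) (X : 'I_n -> A) : C :=
  phit (\prod_(j < n) iota (index (pblock (val s) j) (enum (val s))) (X j)).

Definition cumulant (C : comNzRingType) (A U : algType C) (phit : U -> C)
    (iota : nat -> A -> U) n (p : setpart n) (X : 'I_n -> A) : C :=
  \sum_(s : setpart n | refines s p)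
     phi_sigma phit iota s X * mobius C (@refines n) s p.

Definition Xpiomega (C : comNzRingType) (A U : algType C)
    (iota : nat -> A -> U) n (p : setpart n) (omega : nat -> C)
    (X : 'I_n -> A) (i : 'I_n) : U :=
  let B := pblock (val p) i in
  \sum_(m < #|B|) (omega #|B|) ^+ m.+1 *: iota (nth 0%N [seq val k | k <- enum B] m) (X i).

(* Expand the product of the X_i^{pi,omega} multilinearly: choosing for every i a copy
   f(i) in the block of i gives phi_{ker f} times a product of roots of unity.  By
   exchangeability and Moebius inversion on the partition lattice, phi_{ker f} is the sum
   of K_r over r <= ker f.  Exchanging the sums, K_r is weighted by the sum of those root
   products over all f constant on the blocks of r, which factors over the blocks C of r.
   If C lies in the block E of pi, its factor is a geometric sum of |C|-th powers of a
   primitive |E|-th root of unity: |E| if C = E and 0 otherwise.  Hence only r = pi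
   survives, with weight prod_B |B|. *)

From HB Require Import structures.
From mathcomp Require Import all_boot all_order all_algebra fingroup perm.
From mathcomp Require Import reals.
From mathcomp.real_closed Require Import complex.
Import Order.TTheory GRing.Theory Num.Theory.
Local Open Scope ring_scope.
Set Implicit Arguments.
Unset Strict Implicit.
Unset Printing Implicit Defensive.

Section Mobius.
Variables (R : pzRingType) (T : finType) (le : rel T).
Hypotheses (le_refl : reflexive le) (le_trans : transitive le)
  (le_anti : antisymmetric le).

Let below x y := #|[set z | le x z && le z y && (z != y)]|.

Lemma below_lt x y z : le x z -> le z y -> z != y -> (below x z < below x y)%N.
Proof.
move=> xz zy zNy; apply/proper_card/properP; split.
  apply/subsetP => w; rewrite !inE => /andP[/andP[xw wz] wNz].
  rewrite xw (le_trans wz zy) /=; apply: contraNneq wNz => wy.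
  by apply/eqP/le_anti; rewrite wz wy zy.
by exists z; rewrite !inE ?xz ?zy ?zNy ?eqxx ?andbF.
Qed.

Lemma mobius_fuel_enough k x y : (below x y <= k)%N ->
  forall m, (k <= m)%N -> mobius_fuel R le m x y = mobius_fuel R le k x y.
Proof.
elim: k x y => [|k IHk] x y le_below [|m] le_km //=.
  case xy: (le x y) => //=; case: eqVneq => // xNy.
  move: le_below; rewrite leqn0 => /eqP/cards0_eq/setP/(_ x).
  by rewrite !inE le_refl xy xNy.
case xy: (le x y) => //=; case: eqVneq => // xNy; congr (- _).
apply: eq_bigr => z /andP[/andP[xz zy] zNy]; apply: IHk => //.
by rewrite -ltnS (leq_trans (below_lt xz zy zNy)).
Qed.

Lemma mobius_rec x y : le x y -> x != y ->
  mobius R le x y = - \sum_(z | le x z && le z y && (z != y)) mobius R le x z.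
Proof.
move=> xy xNy; rewrite /mobius.
have : (0 < #|T|)%N by apply/card_gt0P; exists x.
case cardT: #|T| => [//|k] _ /=; rewrite xy (negPf xNy) /=; congr (- _).
apply: eq_bigr => z /andP[/andP[xz zy] zNy].
have below_k : (below x z <= k)%N.
  by rewrite -ltnS -cardT (leq_trans (below_lt xz zy zNy)) ?max_card.
exact: esym (mobius_fuel_enough below_k (leqnSn k)).
Qed.

Lemma sum_mobius x y : le x y ->
  \sum_(z | le x z && le z y) mobius R le x z = (x == y)%:R.
Proof.
move=> xy; have [<-|xNy] := eqVneq x y.
  rewrite (big_pred1 x) => [|z]; last first.
    by apply/andP/eqP => [[xz zx]|->]; [apply/le_anti/andP | rewrite le_refl].
  by rewrite /mobius; case: #|T| => [|k] /=; rewrite le_refl eqxx.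
by rewrite (bigD1 y) ?xy ?le_refl //= mobius_rec // addNr.
Qed.

End Mobius.

Section SetPartitions.
Variable n : nat.
Implicit Types (r s p : setpart n).

Lemma setpart_trivIset s : trivIset (val s).
Proof. by case/and3P: (valP s). Qed.

Lemma setpart_cover s i : i \in cover (val s).
Proof. by case/and3P: (valP s) => /eqP -> _ _; rewrite inE. Qed.

Lemma setpart_block s i : pblock (val s) i \in val s.
Proof. exact/pblock_mem/setpart_cover. Qed.

Lemma mem_setpart_block s i : i \in pblock (val s) i.
Proof. by rewrite mem_pblock setpart_cover. Qed.

Lemma setpart_block_eq s B i : B \in val s -> i \in B -> pblock (val s) i = B.
Proof. exact/def_pblock/setpart_trivIset. Qed.

Lemma setpart_neq0 s B : B \in val s -> exists b, b \in B.
Proof.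
move=> Bs; have [B0|[b bB]] := set_0Vmem B; last by exists b.
by case/and3P: (valP s) => _ _; rewrite -B0 Bs.
Qed.

Lemma setpart_sub_eq r s : {subset val r <= val s} -> r = s.
Proof.
move=> rs; apply/val_inj/setP => B; apply/idP/idP => [/rs //|Bs].
have [b bB] := setpart_neq0 Bs.
have bs := rs _ (setpart_block r b).
by rewrite -(setpart_block_eq Bs bB) (setpart_block_eq bs)
  ?setpart_block ?mem_setpart_block.
Qed.

Lemma refines_refl : reflexive (@refines n).
Proof. by move=> s; apply/forall_inP => B Bs; apply/exists_inP; exists B. Qed.

Lemma refines_trans : transitive (@refines n).
Proof.
move=> s r p /forall_inP rs /forall_inP sp; apply/forall_inP => B /rs.
case/exists_inP => C /sp /exists_inP[D Dp CD] BC.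
by apply/exists_inP; exists D => //; apply: subset_trans CD.
Qed.

Lemma refines_anti : antisymmetric (@refines n).
Proof.
move=> s p /andP[/forall_inP sp /forall_inP ps]; apply: setpart_sub_eq => B Bs.
have [C Cp BC] := exists_inP (sp B Bs); have [D Ds CD] := exists_inP (ps C Cp).
have [b bB] := setpart_neq0 Bs.
have BD : B = D.
  by rewrite -(setpart_block_eq Bs bB) (setpart_block_eq Ds) ?(subsetP CD) ?(subsetP BC).
by rewrite (_ : B = C) //; apply/eqP; rewrite eqEsubset BC BD CD.
Qed.

End SetPartitions.

Lemma moment_cumulant (C : comNzRingType) (A U : algType C) (phit : U -> C)
    (iota : nat -> A -> U) n (X : 'I_n -> A) (s : setpart n) :
  phi_sigma phit iota s X = \sum_(r | refines r s) cumulant phit iota r X.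
Proof.
rewrite /cumulant (exchange_big_dep (fun t => refines t s)) /=; last first.
  by move=> r t rs tr; apply: refines_trans rs.
rewrite (eq_bigr (fun t => phi_sigma phit iota t X * (t == s)%:R)) => [|t ts].
  rewrite (bigD1 s) ?refines_refl //= eqxx mulr1 big1 ?addr0 //.
  by move=> t /andP[_ /negPf ->]; rewrite mulr0.
rewrite -big_distrr /= (eq_bigl (fun r => refines t r && refines r s)).
  by rewrite sum_mobius //;
    [apply: refines_refl | apply: refines_trans | apply: refines_anti].
by move=> r; rewrite andbC.
Qed.

Definition blockwise_constant (T : finType) (T' : eqType) (P : {set {set T}})
    (f : T -> T') : bool :=
  [forall C in P, [forall i in C, [forall j in C, f i == f j]]].

Section BlockwiseConstant.
Variables (T T' : finType) (P : {set {set T}}).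
Hypothesis partP : partition P [set: T].

Let trivP : trivIset P. Proof. by case/and3P: partP. Qed.

Let coverP i : i \in cover P.
Proof. by case/and3P: partP => /eqP -> _ _; rewrite inE. Qed.

Let block_of i : {C in P} := exist _ (pblock P i) (pblock_mem (coverP i)).

Let block_neq0 (C : {C in P}) : exists i, i \in val C.
Proof.
have [C0|[i iC]] := set_0Vmem (val C); last by exists i.
by case/and3P: partP => _ _; rewrite -C0 (valP C).
Qed.

Let rep (C : {C in P}) : T := xchoose (block_neq0 C).

Let mem_block_of i : i \in val (block_of i).
Proof. by rewrite mem_pblock coverP. Qed.

Let block_ofE (C : {C in P}) i : i \in val C -> block_of i = C.
Proof. by move=> iC; apply/val_inj/(def_pblock trivP (valP C) iC). Qed.

Lemma big_blockwise_constant (R : comPzSemiRingType) (F : T -> T' -> R) :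
  \sum_(f : {ffun T -> T'} | blockwise_constant P f) \prod_i F i (f i) =
  \prod_(C in P) \sum_x \prod_(i in C) F i x.
Proof.
pose lift (g : {ffun {C in P} -> T'}) := [ffun i => g (block_of i)].
have lift_const g : blockwise_constant P (lift g).
  apply/forall_inP => C CP; apply/forall_inP => i iC; apply/forall_inP => j jC.
  by rewrite !ffunE (block_ofE (C := exist _ C CP) iC) (block_ofE (C := exist _ C CP) jC).
rewrite [RHS]big_sub [RHS]bigA_distr_bigA (reindex lift) /=; last first.
  exists (fun f : {ffun T -> T'} => [ffun C => f (rep C)]) => [g _|f].
    by apply/ffunP => C; rewrite !ffunE (block_ofE (xchooseP (block_neq0 C))).
  rewrite inE => /forall_inP f_const; apply/ffunP => i; rewrite !ffunE.
  have /forall_inP/(_ _ (mem_block_of i))/forall_inP := f_const _ (valP (block_of i)).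
  by move/(_ _ (xchooseP (block_neq0 _)))/eqP.
apply: eq_big => [g|g _]; first exact: lift_const.
rewrite (partition_big block_of xpredT) //=; apply: eq_bigr => C _.
rewrite (eq_bigl (mem (val C))) => [|i]; last first.
  by apply/eqP/idP => [<-|/block_ofE //]; apply: mem_block_of.
by apply: eq_bigr => i /block_ofE <-; rewrite ffunE.
Qed.

End BlockwiseConstant.

Definition ker_setpart n (T : eqType) (f : 'I_n -> T) : setpart n :=
  exist _ (preim_partition f [set: 'I_n]) (preim_partitionP f [set: 'I_n]).

Lemma mem_ker_setpart_block n (T : eqType) (f : 'I_n -> T) i j :
  (j \in pblock (val (ker_setpart f)) i) = (f i == f j).
Proof. by rewrite pblock_equivalence_partition ?inE //; split=> // /eqP ->. Qed.

Lemma refines_ker_setpart n (T : eqType) (r : setpart n) (f : 'I_n -> T) :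
  refines r (ker_setpart f) = blockwise_constant (val r) f.
Proof.
apply/forall_inP/forall_inP => [r_ker C Cr|f_const C Cr].
  have /exists_inP[D Dker CD] := r_ker C Cr.
  apply/forall_inP => i iC; apply/forall_inP => j jC.
  by rewrite -mem_ker_setpart_block (setpart_block_eq Dker) ?(subsetP CD).
have [c cC] := setpart_neq0 Cr.
apply/exists_inP; exists (pblock (val (ker_setpart f)) c); first exact: setpart_block.
apply/subsetP => j jC; rewrite mem_ker_setpart_block.
by move/forall_inP/(_ c cC)/forall_inP/(_ j jC): (f_const C Cr).
Qed.

(* Send the complement of [A] onto the complement of [g @: A] in enumeration order. *)
Lemma perm_extend (T : finType) (A : {set T}) (g : T -> T) :
  {in A &, injective g} -> exists q : {perm T}, {in A, q =1 g}.
Proof.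
move=> g_inj; pose dom := enum (~: A); pose cod := enum (~: (g @: A)).
have size_cod : size cod = size dom.
  have : #|~: (g @: A)| = #|~: A|.
    by apply/eqP; rewrite -(eqn_add2l #|g @: A|) cardsC card_in_imset // cardsC.
  by rewrite !cardE.
have dom_index_lt x : x \notin A -> (index x dom < size cod)%N.
  by move=> xNA; rewrite size_cod index_mem mem_enum inE.
pose h x := if x \in A then g x else nth x cod (index x dom).
have h_out x : x \notin A -> h x \notin g @: A.
  move=> xNA; rewrite /h (negPf xNA).
  by have := mem_nth x (dom_index_lt x xNA); rewrite mem_enum inE.
have : injective h.
  move=> x y; case/boolP: (x \in A) => xA; case/boolP: (y \in A) => yA.
  - by rewrite /h xA yA; apply: g_inj.
  - by move=> hxy; have := h_out y yA; rewrite -hxy /h xA imset_f.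
  - by move=> hxy; have := h_out x xA; rewrite hxy /h yA imset_f.
  rewrite /h (negPf xA) (negPf yA) => /eqP.
  rewrite (set_nth_default y x) ?dom_index_lt // nth_uniq ?enum_uniq ?dom_index_lt //.
  by move=> /eqP; apply: (index_inj x); rewrite /dom mem_enum inE.
by move=> h_inj; exists (perm h_inj) => x xA; rewrite permE /h xA.
Qed.

Lemma perm_of_same_kernel (I T : finType) (f g : I -> T) :
  (forall i j, (f i == f j) = (g i == g j)) ->
  exists q : {perm T}, forall i, q (f i) = g i.
Proof.
move=> fg; pose h x := if [pick i | f i == x] is Some i then g i else x.
have hf i : h (f i) = g i.
  rewrite /h; case: pickP => [j /eqP fji|/(_ i)]; last by rewrite eqxx.
  by apply/eqP; rewrite -fg fji.
have [|q qh] := @perm_extend T [set f i | i in I] h.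
  move=> _ _ /imsetP[i _ ->] /imsetP[j _ ->].
  by rewrite !hf => /eqP; rewrite -fg => /eqP.
by exists q => i; rewrite qh ?hf ?imset_f.
Qed.

Lemma nat_bijection_of_same_kernel (I : finType) (f g : I -> nat) :
  (forall i j, (f i == f j) = (g i == g j)) ->
  exists2 s : nat -> nat, bijective s & forall i, s (f i) = g i.
Proof.
move=> fg; pose N := (\max_i maxn (f i) (g i)).+1%N.
have [f_lt g_lt] : (forall i, f i < N)%N /\ (forall i, g i < N)%N.
  by split=> i; rewrite ltnS (leq_trans _ (leq_bigmax i)) ?leq_maxl ?leq_maxr.
have [|q qfg] :=
  @perm_of_same_kernel I 'I_N (fun i => inord (f i)) (fun i => inord (g i)).
  by move=> i j; rewrite -!val_eqE /= !inordK.
pose s k := if (k < N)%N then val (q (inord k)) else k.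
pose s' k := if (k < N)%N then val (q^-1 (inord k))%g else k.
exists s => [|i]; last by rewrite /s f_lt qfg /= inordK.
have s_id k : (N <= k)%N -> s k = k /\ s' k = k.
  by rewrite /s /s' ltnNge => ->.
exists s' => k; have [kN|/s_id[sk s'k]] := ltnP k N; rewrite ?sk ?s'k ?sk //.
  by rewrite /s' /s kN ltn_ord inord_val permK /= inordK.
by rewrite /s' /s kN ltn_ord inord_val permKV /= inordK.
Qed.

(* The coefficient omega_b^m of X_i^{(k_m)} in X_i^{pi,omega}, B = {k_1 < ... < k_b}
   being the block of i. *)
Definition block_weight (K : pzSemiRingType) n (omega : nat -> K) (B : {set 'I_n})
    (x : 'I_n) : K :=
  if x \in B then omega #|B| ^+ (index x (enum B)).+1 else 0.

Lemma big_enum_index (R : nmodType) (T : finType) (B : {pred T}) (x0 : T)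
    (F : T -> nat -> R) :
  \sum_(x in B) F x (index x (enum B)) = \sum_(m < #|B|) F (nth x0 (enum B) m) m.
Proof.
rewrite -big_enum (big_nth x0) big_mkord cardE; apply: eq_bigr => m _.
by rewrite index_uniq ?enum_uniq.
Qed.

Lemma XpiomegaE (K : comNzRingType) (A U : algType K) (iota : nat -> A -> U) n
    (p : setpart n) (omega : nat -> K) (X : 'I_n -> A) i :
  Xpiomega iota p omega X i =
  \sum_x block_weight omega (pblock (val p) i) x *: iota x (X i).
Proof.
rewrite /Xpiomega /block_weight; set B := pblock _ i.
rewrite [RHS](bigID (mem B)) /= [X in _ + X]big1 => [|x /negPf ->]; last exact: scale0r.
rewrite addr0 (eq_bigr (fun x => omega #|B| ^+ (index x (enum B)).+1 *: iota x (X i)));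
  last by move=> x ->.
rewrite (big_enum_index _ i (fun x m => omega #|B| ^+ m.+1 *: iota x (X i))).
by apply: eq_bigr => m _; rewrite (nth_map i) // -cardE.
Qed.

Section Exchangeability.
Variables (C : comNzRingType) (A U : algType C) (phi : A -> C) (phit : U -> C)
  (iota : nat -> A -> U).
Hypothesis exch : exchangeability_system phi phit iota.

Lemma phit_lincomb (I : Type) (r : seq I) (a : I -> C) (u : I -> U) :
  phit (\sum_(i <- r) a i *: u i) = \sum_(i <- r) a i * phit (u i).
Proof.
have [[phit_lin _] _ _ _] := exch.
elim: r => [|i r IHr]; last by rewrite !big_cons phit_lin IHr.
rewrite !big_nil; have := phit_lin 1 0 0.
by rewrite scaler0 addr0 mul1r -{1}[phit 0]addr0 => /addrI/esym.
Qed.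

Lemma phit_prod_same_kernel m (X : 'I_m -> A) (f g : 'I_m -> nat) :
  (forall i j, (f i == f j) = (g i == g j)) ->
  phit (\prod_j iota (f j) (X j)) = phit (\prod_j iota (g j) (X j)).
Proof.
case: exch => _ _ _ exchangeable /nat_bijection_of_same_kernel[s s_bij sf].
rewrite (exchangeable m X f s s_bij); congr (phit _).
by apply: eq_bigr => j _; rewrite sf.
Qed.

Lemma phit_prod_ker n k (X : 'I_n -> A) (f : 'I_n -> 'I_k) :
  phit (\prod_j iota (f j) (X j)) = phi_sigma phit iota (ker_setpart f) X.
Proof.
apply: phit_prod_same_kernel => i j; set K := val (ker_setpart f).
rewrite (inj_in_eq (@index_inj _ (pblock K i) (enum K))) ?mem_enum ?setpart_block //.
by rewrite eq_pblock ?setpart_trivIset ?setpart_cover // mem_ker_setpart_block.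
Qed.

Lemma phit_prod_Xpiomega n (X : 'I_n -> A) (p : setpart n) (omega : nat -> C) :
  phit (\prod_i Xpiomega iota p omega X i) =
  \sum_r cumulant phit iota r X *
    \sum_(f : {ffun 'I_n -> 'I_n} | refines r (ker_setpart f))
       \prod_i block_weight omega (pblock (val p) i) (f i).
Proof.
under eq_bigr do rewrite XpiomegaE.
rewrite bigA_distr_bigA /=; under eq_bigr do rewrite scaler_prod.
rewrite phit_lincomb.
under [LHS]eq_bigr do rewrite phit_prod_ker moment_cumulant big_distrr.
rewrite (exchange_big_dep xpredT) //=; apply: eq_bigr => r _.
by rewrite mulr_sumr; apply: eq_bigr => f _; rewrite mulrC.
Qed.

End Exchangeability.

Lemma sum_expS_eq0 (K : idomainType) (z : K) N :
  z ^+ N = 1 -> z != 1 -> \sum_(m < N) z ^+ m.+1 = 0.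
Proof.
move=> zN z1; have /eqP : (z - 1) * \sum_(m < N) z ^+ m = 0.
  by rewrite -subrX1 zN subrr.
rewrite mulf_eq0 subr_eq0 (negPf z1) /= => /eqP sum0.
by under eq_bigr do rewrite exprS; rewrite -mulr_sumr sum0 mulr0.
Qed.

Section RootsOfUnity.
Variables (K : idomainType) (n : nat) (p : setpart n) (omega : nat -> K).
Hypothesis omega_prim : forall B, B \in val p -> (#|B|).-primitive_root (omega #|B|).

Lemma sum_prod_block_weight (C : {set 'I_n}) c : c \in C ->
  \sum_x \prod_(i in C) block_weight omega (pblock (val p) i) x =
  if C \in val p then #|C|%:R else 0.
Proof.
move=> cC; set E := pblock (val p) c; have Ep : E \in val p := setpart_block p c.
have [CE|CNE] := boolP (C \subset E); last first.
  rewrite ifN; last by apply: contraNN CNE => Cp; rewrite /E (setpart_block_eq Cp cC).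
  have /subsetPn[i iC iNE] := CNE.
  apply: big1 => x _; have [xE|xNE] := boolP (x \in E).
    rewrite (bigD1 i) //= {1}/block_weight ifN ?mul0r //; apply: contra iNE => xi.
    by rewrite -(setpart_block_eq Ep xE) (same_pblock (setpart_trivIset p) xi)
      mem_setpart_block.
  by rewrite (bigD1 c) //= {1}/block_weight -/E (negPf xNE) mul0r.
have blockE i : i \in C -> pblock (val p) i = E.
  by move=> iC; apply: setpart_block_eq Ep (subsetP CE i iC).
transitivity (\sum_(x in E) (omega #|E| ^+ #|C|) ^+ (index x (enum E)).+1).
  rewrite (bigID (mem E)) /= [X in _ + X]big1 ?addr0 => [|x xNE]; last first.
    by rewrite (bigD1 c) //= blockE // /block_weight (negPf xNE) mul0r.
  apply: eq_bigr => x xE; rewrite -exprAC -prodr_const.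
  by apply: eq_bigr => i iC; rewrite blockE // /block_weight xE.
rewrite (big_enum_index _ c (fun _ m => (omega #|E| ^+ #|C|) ^+ m.+1)).
have prim := omega_prim Ep.
case: ifP => [Cp|CNp].
  rewrite -{1 2}(setpart_block_eq Cp cC) (prim_expr_order prim).
  by under eq_bigr do rewrite expr1n; rewrite sumr_const card_ord.
apply: sum_expS_eq0; first by rewrite exprAC (prim_expr_order prim) expr1n.
rewrite -(prim_order_dvd prim) gtnNdvd //; first by apply/card_gt0P; exists c.
by apply: proper_card; rewrite properEneq CE andbT; apply: contraFN CNp => /eqP ->.
Qed.

Lemma sum_refines_prod_block_weight (r : setpart n) :
  \sum_(f : {ffun 'I_n -> 'I_n} | refines r (ker_setpart f))
     \prod_i block_weight omega (pblock (val p) i) (f i) =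
  if r == p then \prod_(C in val p) #|C|%:R else 0.
Proof.
rewrite (eq_bigl (fun f : {ffun 'I_n -> 'I_n} => blockwise_constant (val r) f));
  last by move=> f; apply: refines_ker_setpart.
rewrite (big_blockwise_constant (valP r)
  (fun i => block_weight omega (pblock (val p) i))).
rewrite (eq_bigr (fun C => if C \in val p then #|C|%:R else 0)) => [|C Cr]; last first.
  by have [c cC] := setpart_neq0 Cr; apply: sum_prod_block_weight cC.
have [->|rNp] := eqVneq r p; first by apply: eq_bigr => C ->.
have [C Cr CNp] : exists2 C, C \in val r & C \notin val p.
  have : ~~ [forall C in val r, C \in val p].
    by apply: contra rNp => /forall_inP/setpart_sub_eq ->.
  by rewrite negb_forall_in => /exists_inP.
by rewrite (bigD1 C) //= (negPf CNp) mul0r.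
Qed.

End RootsOfUnity.

Theorem proposition2p8 (R : realType) (A U : algType R[i])
    (phi : A -> R[i]) (phit : U -> R[i]) (iota : nat -> A -> U)
    (hphi : (forall (a : R[i]) (x y : A), phi (a *: x + y) = a * phi x + phi y)
            /\ phi 1 = 1)
    (hE : exchangeability_system phi phit iota)
    (n : nat) (X : 'I_n -> A) (p : setpart n) (omega : nat -> R[i])
    (homega : forall B, B \in val p -> (#|B|).-primitive_root (omega #|B|)) :
  cumulant phit iota p X =
  (\prod_(B in val p) (#|B|%:R : R[i]))^-1 *
  phit (\prod_(i < n) Xpiomega iota p omega X i).
Proof.
have blocks_neq0 : \prod_(B in val p) (#|B|%:R : R[i]) != 0.
  apply/prodf_neq0 => B Bp; rewrite pnatr_eq0 -lt0n.
  by have [b bB] := setpart_neq0 Bp; apply/card_gt0P; exists b.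
rewrite (phit_prod_Xpiomega hE) (eq_bigr (fun r => if r == p then
  cumulant phit iota r X * \prod_(B in val p) #|B|%:R else 0)) => [|r _]; last first.
  by rewrite (sum_refines_prod_block_weight homega r); case: eqP; rewrite ?mulr0.
by rewrite -big_mkcond big_pred1_eq mulrCA mulVf ?mulr1.
Qed.
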